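(* Let $p\in(0,1)$ and let $(\lambda_n)_{n\ge1}$ be a sequence with $\lambda_1=1$ and $0\le\lambda_n\le\lambda_{n-1}$ for all $n>1$. Let $r_1,r_2,\dots$ be $\{0,1\}$-valued random variables with $\Pr(r_1=1)=p$ and, for every $n\ge2$, $\Pr(r_n=1\mid r_1,\dots,r_{n-1})=\lambda_n p+(1-\lambda_n)\bar p_{n-1}$, where $\bar p_m=\frac1m\sum_{i=1}^m r_i$. For values $\hat\lambda_k\in(0,1]$, $k\ge2$, define $\hat r_1=r_1$ and $\hat r_k=\frac{r_k-(1-\hat\lambda_k)\bar p_{k-1}}{\hat\lambda_k}$ for $k\ge2$. Let $i>j\ge1$ with $\lambda_i>0$ and $\hat\lambda_i=\lambda_i$. Then $\hat r_i$ and $\hat r_j$ are uncorrelated, i.e. $\mathbb{E}[\hat r_i\hat r_j]=\mathbb{E}[\hat r_i]\,\mathbb{E}[\hat r_j]$. *)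

From HB Require Import structures.
From mathcomp Require Import all_boot all_order all_algebra.
From mathcomp Require Import all_classical all_reals all_analysis.
Set Implicit Arguments. Unset Strict Implicit. Unset Printing Implicit Defensive.
Import Order.TTheory GRing.Theory Num.Theory.
Local Open Scope ring_scope.
Local Open Scope classical_set_scope.

(* Indices start at 1; the value of sequences at index 0 is irrelevant. *)

Definition pbar {T : Type} {R : realType} (r : nat -> T -> R) (m : nat) (t : T) : R :=
  (\sum_(1 <= k < m.+1) r k t) / m%:R.

Definition rhat {T : Type} {R : realType} (r : nat -> T -> R) (lh : nat -> R)
  (k : nat) (t : T) : R :=
  if (k <= 1)%N then r 1%N t
  else (r k t - (1 - lh k) * pbar r k.-1 t) / lh k.

Definition prefix_event {T : Type} {R : realType} (r : nat -> T -> R)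
  (n : nat) (a : nat -> bool) : set T :=
  [set t | forall k, (1 <= k < n)%N -> r k t = (a k)%:R].

(* The model: r_n are {0,1}-valued random variables, P(r_1 = 1) = p and
   P(r_n = 1 | r_1,...,r_{n-1}) = lam_n p + (1 - lam_n) pbar_{n-1}, the
   conditional probability (given finitely-valued variables) being expressed
   atom-wise by  P(A_a /\ r_n = 1) = (lam_n p + (1-lam_n) mean(a)) P(A_a)
   for every prefix atom A_a. *)
Definition reinforced_model {d} {T : measurableType d} {R : realType}
  (P : probability T R) (p : R) (lam : nat -> R) (r : nat -> T -> R) : Prop :=
  [/\ (forall n, (1 <= n)%N -> measurable_fun setT (r n)),
      (forall n t, (1 <= n)%N -> r n t = 0 \/ r n t = 1),
      P [set t | r 1%N t = 1] = p%:E &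
      (forall n (a : nat -> bool), (2 <= n)%N ->
         P (prefix_event r n a `&` [set t | r n t = 1]) =
         ((lam n * p + (1 - lam n) *
            ((\sum_(1 <= k < n) (a k)%:R) / n.-1%:R))%:E * P (prefix_event r n a))%E)].

From HB Require Import structures.
From mathcomp Require Import all_boot all_order all_algebra.
From mathcomp Require Import all_classical all_reals all_analysis.
From mathcomp Require Import ring.
Import Order.TTheory GRing.Theory Num.Theory.
Local Open Scope ring_scope.
Local Open Scope classical_set_scope.

(* Write i = m + 1. The variables r_1, ..., r_m generate a finite sigma-algebra
   whose atoms are indexed by the words b in {0,1}^m, and rhat_j (j <= m) is a
   function of the word. On the atom of b, r_{m+1} has conditional mean
   lam_i p + (1 - lam_i) mean(b), so with lh_i = lam_i the conditional mean of
   rhat_i is exactly p. Hence E[rhat_i g(word)] = p E[g(word)] for every g;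
   taking g = rhat_j and g = 1 gives E[rhat_i rhat_j] = p E[rhat_j] and
   E[rhat_i] = p. *)

Lemma eq_pbar {T T' : Type} {R : realType} (r : nat -> T -> R)
    (r' : nat -> T' -> R) m t t' :
  (forall k, (1 <= k <= m)%N -> r k t = r' k t') ->
  pbar r m t = pbar r' m t'.
Proof. by move=> eq_r; rewrite /pbar; congr (_ / _); apply: eq_big_nat. Qed.

Lemma eq_rhat {T T' : Type} {R : realType} (r : nat -> T -> R)
    (r' : nat -> T' -> R) lh j t t' : (1 <= j)%N ->
  (forall k, (1 <= k <= j)%N -> r k t = r' k t') ->
  rhat r lh j t = rhat r' lh j t'.
Proof.
move=> j_gt0 eq_r; rewrite /rhat; case: ifP => _; first exact: eq_r.
rewrite eq_r ?j_gt0 ?leqnn //; congr ((_ - _ * _) / _).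
apply: eq_pbar => k /andP[k_gt0 le_kj].
by rewrite eq_r // k_gt0 (leq_trans le_kj) // leq_pred.
Qed.

Lemma measurable_prefix_event {d} {T : measurableType d} {R : realType}
    (r : nat -> T -> R) n a :
  (forall k, (1 <= k)%N -> measurable_fun setT (r k)) ->
  measurable (prefix_event r n a).
Proof.
move=> r_meas.
have -> : prefix_event r n a =
    \bigcap_k (if (1 <= k < n)%N then r k @^-1` [set (a k)%:R] else setT).
  apply/seteqP; split=> t /= prefix_t k; first by case: ifP => // /prefix_t.
  by move=> k_in; have := prefix_t k I; rewrite k_in.
apply: bigcapT_measurable => k; case: ifP => [/andP[k_gt0 _]|_] //.
by rewrite -[X in measurable X]setTI; exact: r_meas.
Qed.

Lemma expectation_sum_indic {d} {T : measurableType d} {R : realType}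
    (P : probability T R) (I : finType) (c : I -> R) (B : I -> set T) :
  (forall i, measurable (B i)) ->
  ('E_P[fun t => (\sum_i c i * \1_(B i) t)%R] =
   (\sum_i c i * fine (P (B i)))%:E)%E.
Proof.
move=> B_meas; rewrite unlock.
have cB_int i : P.-integrable setT (fun t => (c i * \1_(B i) t)%:E).
  exact: integrableZl (integrable_indic _ _).
under eq_integral do rewrite -sumEFin.
rewrite integral_sum // -sumEFin; apply: eq_bigr => i _.
under eq_integral do rewrite EFinM.
rewrite integralZl //; last exact: integrable_indic.
by rewrite integral_indic // setIT EFinM fineK // fin_num_measure.
Qed.

Local Notation word m := {ffun 'I_m -> bool}.

(* Bit k of the word, for 1 <= k <= m, is the value of r_k; index 0 is junk. *)
Definition word_bit {m} (b : word m) (k : nat) : bool :=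
  if insub k.-1 is Some k' then b k' else false.

Definition word_process {R : realType} m : nat -> word m -> R :=
  fun k b => (word_bit b k)%:R.

Lemma word_bitS {m} (b : word m) (k : 'I_m) : word_bit b k.+1 = b k.
Proof. by rewrite /word_bit /= valK. Qed.

Section PrefixWords.
Context {T : Type} {R : realType} (r : nat -> T -> R) (m : nat).
Hypothesis r01 : forall n t, (1 <= n)%N -> r n t = 0 \/ r n t = 1.

Definition prefix_word (t : T) : word m :=
  [ffun k : 'I_m => r k.+1 t == 1].

Lemma prefix_wordE t k : (1 <= k <= m)%N ->
  r k t = word_process m k (prefix_word t).
Proof.
case: k => [//|k] /= lt_km.
rewrite /word_process (word_bitS _ (Ordinal lt_km)) ffunE /=.
by case: (r01 k.+1 t isT) => ->; rewrite ?eqxx // eq_sym oner_eq0.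
Qed.

Lemma pbar_prefix_word t : pbar r m t = pbar (word_process m) m (prefix_word t).
Proof. by apply: eq_pbar => k; exact: prefix_wordE. Qed.

Lemma rhat_prefix_word lh j t : (1 <= j <= m)%N ->
  rhat r lh j t = rhat (word_process m) lh j (prefix_word t).
Proof.
move=> /andP[j_gt0 le_jm]; apply: eq_rhat => // k /andP[k_gt0 le_kj].
by apply: prefix_wordE; rewrite k_gt0 (leq_trans le_kj).
Qed.

Lemma rhat_next_prefix_word lh t : (0 < m)%N ->
  rhat r lh m.+1 t = (\1_[set t | r m.+1 t = 1] t -
    (1 - lh m.+1) * pbar (word_process m) m (prefix_word t)) / lh m.+1.
Proof.
move=> m_gt0; rewrite /rhat ifN -?ltnNge // pbar_prefix_word indicE.
case: (r01 m.+1 t isT) => r_t; last by rewrite r_t mem_set.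
by rewrite r_t memNset //= r_t => /esym/eqP; rewrite oner_eq0.
Qed.

Lemma prefix_event_word b t :
  prefix_event r m.+1 (word_bit b) t <-> prefix_word t = b.
Proof.
split=> [prefix_t | <- k /andP[k_gt0 lt_km]].
  apply/ffunP => k; rewrite ffunE prefix_t ?word_bitS /=; last by rewrite ltnS.
  by case: (b k); rewrite ?eqxx // eq_sym oner_eq0.
by rewrite prefix_wordE // k_gt0.
Qed.

Lemma prefix_fun_sum_indic (g : word m -> R) t :
  g (prefix_word t) = \sum_b g b * \1_(prefix_event r m.+1 (word_bit b)) t.
Proof.
rewrite (bigD1 (prefix_word t)) //= big1 ?addr0.
  by rewrite indicE mem_set ?mulr1 //; apply/prefix_event_word.
move=> b /eqP neq_b; rewrite indicE memNset ?mulr0 //.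
by move/prefix_event_word => /esym.
Qed.

End PrefixWords.

Section PrefixExpectation.
Context {d : measure_display} {T : measurableType d} {R : realType}.
Variables (P : probability T R) (r : nat -> T -> R) (m : nat).
Hypothesis r_meas : forall n, (1 <= n)%N -> measurable_fun setT (r n).
Hypothesis r01 : forall n t, (1 <= n)%N -> r n t = 0 \/ r n t = 1.

Lemma expectation_prefix_fun (g : word m -> R) :
  ('E_P[fun t => g (prefix_word r m t)] =
   (\sum_b g b * fine (P (prefix_event r m.+1 (word_bit b))))%:E)%E.
Proof.
rewrite (eq_fun (prefix_fun_sum_indic _ _ r01 g)) expectation_sum_indic // => b.
exact: measurable_prefix_event.
Qed.

Lemma sum_prefix_prob :
  \sum_(b : word m) fine (P (prefix_event r m.+1 (word_bit b))) = 1.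
Proof.
have := expectation_prefix_fun (fun=> 1).
rewrite -[fun=> 1]/(cst 1) expectation_cst => -[->].
by under eq_bigr do rewrite mul1r.
Qed.

End PrefixExpectation.

Lemma expectation_prefix_fun_mul_rhat {d} {T : measurableType d} {R : realType}
    {P : probability T R} {p : R} {lam : nat -> R} {r : nat -> T -> R}
    m (lh : nat -> R) (g : word m -> R) :
  reinforced_model P p lam r ->
  (0 < m)%N -> lh m.+1 = lam m.+1 -> lam m.+1 != 0 ->
  ('E_P[fun t => (g (prefix_word r m t) * rhat r lh m.+1 t)%R] =
   (p * \sum_b g b * fine (P (prefix_event r m.+1 (word_bit b))))%:E)%E.
Proof.
move=> [r_meas r01 _ next_law] m_gt0 lh_lam lam_neq0.
set l := lam m.+1.
pose mean (b : word m) : R := pbar (word_process m) m b.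
pose next_one := [set t | r m.+1 t = 1].
have next_one_meas : measurable next_one.
  by rewrite -[next_one]setTI; exact: r_meas m.+1 isT measurableT [set 1] _.
pose B (b : word m) (one : bool) :=
  prefix_event r m.+1 (word_bit b) `&` (if one then next_one else setT).
pose c b (one : bool) :=
  if one then g b / l else - (g b * (1 - l) * mean b / l).
have integrandE t : g (prefix_word r m t) * rhat r lh m.+1 t =
    \sum_bc c bc.1 bc.2 * \1_(B bc.1 bc.2) t.
  rewrite -(pair_bigA _ (fun b one => c b one * \1_(B b one) t)) /=.
  under eq_bigr do rewrite big_bool /= !indicI /= indicT mulr1 mulrA.
  rewrite big_split -mulr_suml /=.
  rewrite -(prefix_fun_sum_indic _ _ r01 (fun b => g b / l)).
  rewrite -(prefix_fun_sum_indic _ _ r01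
    (fun b => - (g b * (1 - l) * mean b / l))).
  by rewrite rhat_next_prefix_word // lh_lam /l /next_one /mean; ring.
rewrite (eq_fun integrandE) expectation_sum_indic; last first.
  by case=> b [] /=; apply: measurableI => //; exact: measurable_prefix_event.
congr EFin; rewrite -(pair_bigA _ (fun b one => c b one * fine (P (B b one)))).
rewrite mulr_sumr; apply: eq_bigr => b _.
rewrite big_bool /B /= setIT next_law // fineM ?fin_num_measure //=; last first.
  exact: measurable_prefix_event.
rewrite -/l (_ : _ / m%:R = mean b) //.
by field.
Qed.

Local Close Scope classical_set_scope.

Theorem lemmaA12 (d : measure_display) (T : measurableType d) (R : realType)
  (P : probability T R) (p : R) (lam lh : nat -> R) (r : nat -> T -> R)
  (i j : nat) :
  0 < p < 1 ->
  lam 1%N = 1 ->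
  (forall n, (1 < n)%N -> 0 <= lam n <= lam n.-1) ->
  reinforced_model P p lam r ->
  (forall k, (2 <= k)%N -> 0 < lh k <= 1) ->
  (1 <= j)%N -> (j < i)%N ->
  0 < lam i -> lh i = lam i ->
  ('E_P[rhat r lh i \* rhat r lh j] = 'E_P[rhat r lh i] * 'E_P[rhat r lh j])%E.
Proof.
move=> _ _ _ model _ j_gt0; case: i => [//|m] lt_jm lam_gt0 lh_lam.
have m_gt0 : (0 < m)%N := leq_trans j_gt0 lt_jm.
have lam_neq0 : lam m.+1 != 0 by rewrite gt_eqF.
have [r_meas r01 _ _] := model.
pose rhat_j b := rhat (word_process m) lh j b.
have rhat_jE : rhat r lh j = fun t => rhat_j (prefix_word r m t).
  by apply/funext => t; rewrite (rhat_prefix_word _ m r01) // j_gt0.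
have -> : rhat r lh m.+1 \* rhat r lh j =
    fun t => rhat_j (prefix_word r m t) * rhat r lh m.+1 t.
  by apply/funext => t; rewrite /= rhat_jE mulrC.
have -> : ('E_P[rhat r lh m.+1] = 'E_P[fun t => (1 * rhat r lh m.+1 t)%R])%E.
  by congr expectation; apply/funext => t; rewrite mul1r.
rewrite rhat_jE (expectation_prefix_fun _ _ _ r_meas r01).
rewrite (expectation_prefix_fun_mul_rhat _ _ _ model) //.
rewrite (expectation_prefix_fun_mul_rhat _ _ (fun=> 1) model) //.
rewrite -EFinM; congr EFin; under [in RHS]eq_bigr do rewrite mul1r.
by rewrite (sum_prefix_prob _ _ _ r_meas r01) mulr1.
Qed.
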